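(* Let $\gamma\ge 0$ and define $R(A)=\mathrm{vol}_g(A)+\nu_S\,\mathrm{unit}(A)+\gamma\,\mathrm{pen}(A)$ for $A\subseteq V'$. Use the convention $x/0=+\infty$ for $x>0$. 1. For every $f\in\mathbb{R}^m_+\setminus\{0\}$, $$\frac{R^L(f)}{\mathrm{assoc}_S^L(f)}\ \ge\ \min_{i=1,\dots,m}\frac{R(A_i)}{\mathrm{assoc}_S(A_i)},\qquad A_i=\{j\in V': f_j\ge f_i\}.$$ 2. Consequently, $$\min_{f\in\mathbb{R}^m_+\setminus\{0\}}\frac{R^L(f)}{\mathrm{assoc}^L_S(f)}=\min_{\emptyset\ne A\subseteq V'}\frac{R(A)}{\mathrm{assoc}_S(A)},$$ and the minimum on the left is attained. 3. For any minimizer $f^*$ of the left-hand problem, a set $A^*$ chosen among the thresholded sets $A_i=\{j\in V':f^*_j\ge f^*_i\}$, $i=1,\dots,m$, so as to minimize $R(A_i)/\mathrm{assoc}_S(A_i)$, is a minimizer of the right-hand (set) problem.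
   Context: Let $V$ be a finite vertex set with symmetric nonnegative weights $w_{ij}=w_{ji}\ge0$ and $w_{ii}=0$. - $d_i=\sum_{j\in V}w_{ij}$, and $\mathrm{vol}_h(A)=\sum_{i\in A}h_i$. - $\mathrm{assoc}(A)=\sum_{i,j\in A}w_{ij}$ (ordered pairs), and $\mathrm{cut}(A,B)=\sum_{i\in A,j\in B}w_{ij}$. - Fix $S\subseteq V$, $V'=V\setminus S$, $m=|V'|$, and identify $V'$ with $\{1,\dots,m\}$. - $d^S_i=\sum_{j\in S}w_{ij}$, $g:V\to(0,\infty)$, $\mu_S=\mathrm{assoc}(S)$, $\nu_S=\mathrm{vol}_g(S)$. - $\mathrm{unit}(A)=1$ if $A\ne\emptyset$ and $0$ otherwise. - $\mathrm{assoc}_S(A)=\mathrm{vol}_d(A)-\mathrm{cut}(A,V'\setminus A)+\mathrm{vol}_{d^S}(A)+\mu_S\,\mathrm{unit}(A)$ for $A\subseteq V'$. Constraint data: $M_1,\dots,M_p\in[0,\infty)^V$; reals $k_j,l_j$; a symmetric $\mathrm{dist}:V\times V\to[0,\infty)$ with $\mathrm{dist}(u,u)=0$; and $d_0\ge0$. Penalty: $\mathrm{pen}(\emptyset)=0$, and for $A\ne\emptyset$, $$\mathrm{pen}(A)=\sum_{j}\max\{0,\mathrm{vol}_{M_j}(A)-l_j\}+\sum_j\max\{0,k_j-\mathrm{vol}_{M_j}(A)\}+\sum_{u,v\in A}\max\{0,\mathrm{dist}(u,v)-d_0\}.$$ Lovasz extension: for a set function $F:2^{V'}\to\mathbb{R}$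 with $F(\emptyset)=0$ and $f\in\mathbb{R}^m$, choose a permutation $\pi$ with $f_{\pi(1)}\le\dots\le f_{\pi(m)}$ and let $B_i=\{\pi(i),\dots,\pi(m)\}$. Then $$F^L(f)=\sum_{i=1}^{m-1}F(B_{i+1})\,(f_{\pi(i+1)}-f_{\pi(i)})+F(V')\,f_{\pi(1)}.$$ *)

From HB Require Import structures.
From mathcomp Require Import all_boot all_order all_algebra.
Set Implicit Arguments. Unset Strict Implicit. Unset Printing Implicit Defensive.
Import Order.TTheory GRing.Theory Num.Theory.
Local Open Scope ring_scope.

Section Defs.
Variables (R : realFieldType) (V : finType).

Definition vol (h : V -> R) (A : {set V}) : R := \sum_(i in A) h i.
Definition degw (w : V -> V -> R) (i : V) : R := \sum_j w i j.
Definition degS (w : V -> V -> R) (S : {set V}) (i : V) : R := \sum_(j in S) w i j.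
Definition assoc (w : V -> V -> R) (A : {set V}) : R :=
  \sum_(i in A) \sum_(j in A) w i j.
Definition cut (w : V -> V -> R) (A B : {set V}) : R :=
  \sum_(i in A) \sum_(j in B) w i j.
Definition unitS (A : {set V}) : R := if A == set0 then 0 else 1.

Definition Vp (S : {set V}) := {x : V | x \in ~: S}.
Definition liftS (S : {set V}) (A : {set Vp S}) : {set V} := [set val x | x in A].

Definition assocS (w : V -> V -> R) (S : {set V}) (A : {set Vp S}) : R :=
  vol (degw w) (liftS A) - cut w (liftS A) (~: S :\: liftS A)
  + vol (degS w S) (liftS A) + assoc w S * unitS (liftS A).

Definition pen (p : nat) (M : 'I_p -> V -> R) (k l : 'I_p -> R)
  (dist : V -> V -> R) (d0 : R) (A : {set V}) : R :=
  if A == set0 then 0 else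
    \sum_(j < p) Num.max 0 (vol (M j) A - l j)
  + \sum_(j < p) Num.max 0 (k j - vol (M j) A)
  + \sum_(u in A) \sum_(v in A) Num.max 0 (dist u v - d0).

(* R(A) = vol_g(A) + nu_S unit(A) + gamma pen(A), for A subset of V' *)
Definition Rset (g : V -> R) (S : {set V}) (gamma : R) (p : nat)
  (M : 'I_p -> V -> R) (k l : 'I_p -> R) (dist : V -> V -> R) (d0 : R)
  (A : {set Vp S}) : R :=
  vol g (liftS A) + vol g S * unitS (liftS A) + gamma * pen M k l dist d0 (liftS A).
End Defs.

Section Lovasz.
Variables (R : realFieldType) (T : finType).
(* Lovasz extension, with the permutation pi obtained by (stably) sorting
   the elements of T by increasing value of f; s = [pi(1); ...; pi(m)]. *)
Definition lovasz (F : {set T} -> R) (f : T -> R) : R :=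
  let s := sort (fun x y => f x <= f y) (enum T) in
  let fs := map f s in
  \sum_(i < (size s).-1) F [set x in drop i.+1 s] * (fs`_i.+1 - fs`_i)
  + F setT * fs`_0.
End Lovasz.

(* Extended ratios: None stands for +infinity. x/0 := +infinity. *)
Definition xdiv (R : realFieldType) (x y : R) : option R :=
  if y == 0 then None else Some (x / y).
Definition xle (R : realFieldType) (a b : option R) : bool :=
  match a, b with
  | _, None => true
  | None, Some _ => false
  | Some x, Some y => x <= y
  end.

Definition thr (T : finType) (R : realFieldType) (f : T -> R) (i : T) : {set T} :=
  [set j | f i <= f j].

From HB Require Import structures.
From mathcomp Require Import all_boot all_order all_algebra.
From mathcomp Require Import zify.
Import Order.TTheory GRing.Theory Num.Theory.
Local Open Scope ring_scope.

(* The Lovasz extension is the sum over the sorted coordinates of F(level set)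
   times the nonnegative increment of f, and the ratio of two such nonnegative
   combinations dominates the smallest ratio of the summands (mediant inequality);
   the summands with nonzero increment are exactly thresholded sets.  Conversely
   the extension of an indicator vector of A is F(A), so both minima coincide. *)

Lemma mem_nth_drop (T : eqType) (s : seq T) x0 m k : uniq s -> (k < size s)%N ->
  (nth x0 s k \in drop m s) = (m <= k)%N.
Proof.
move=> us ks; case: (leqP m k) => h.
  have hk : (k - m < size (drop m s))%N by rewrite size_drop; lia.
  by have := mem_nth x0 hk; rewrite nth_drop subnKC.
apply/negbTE/negP => /(nthP x0) [j hj e].
rewrite nth_drop in e; rewrite size_drop in hj.
have := index_uniq x0 ks us; rewrite -e index_uniq //; lia.
Qed.

Section LovaszDecomposition.
Context {R : realFieldType} {T : finType}.
Implicit Types (f : T -> R) (F : {set T} -> R) (A : {set T}).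

Definition ascending f := sort (fun x y => f x <= f y) (enum T).

Definition increment f (i : nat) : R := let fs := map f (ascending f) in
  if i is j.+1 then fs`_j.+1 - fs`_j else fs`_0.

Definition level_set f (i : nat) : {set T} :=
  if i is j.+1 then [set x in drop j.+1 (ascending f)] else setT.

Definition indicator A (x : T) : R := if x \in A then 1 else 0.

Lemma size_ascending f : size (ascending f) = #|T|.
Proof. by rewrite size_sort cardT. Qed.

Lemma uniq_ascending f : uniq (ascending f).
Proof. by rewrite sort_uniq enum_uniq. Qed.

Lemma mem_ascending f x : x \in ascending f.
Proof. by rewrite mem_sort mem_enum. Qed.

Lemma ascending_le f x0 i j : (i <= j)%N -> (j < #|T|)%N ->
  f (nth x0 (ascending f) i) <= f (nth x0 (ascending f) j).
Proof.
move=> ij jn; apply: (sorted_leq_nth (leT := fun x y => f x <= f y)).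
- by move=> y x z; exact: le_trans.
- by move=> x; exact: lexx.
- by apply: sort_sorted => x y; exact: le_total.
- by rewrite inE size_ascending; lia.
- by rewrite inE size_ascending.
- exact: ij.
Qed.

Lemma lovasz_level_sum F f : (0 < #|T|)%N ->
  lovasz F f = \sum_(i < #|T|) F (level_set f i) * increment f i.
Proof.
move=> T0; rewrite /lovasz -/(ascending f) size_ascending.
by case: #|T| T0 => // n _; rewrite big_ord_recl addrC.
Qed.

Lemma incrementE {f} x0 {i} : (i < #|T|)%N -> increment f i =
  if i is j.+1 then f (nth x0 (ascending f) j.+1) - f (nth x0 (ascending f) j)
  else f (nth x0 (ascending f) 0).
Proof.
case: i => [|j] hj; rewrite /increment !(nth_map x0) // size_ascending; lia.
Qed.

Lemma increment_ge0 {f i} : (forall x, 0 <= f x) -> (i < #|T|)%N -> 0 <= increment f i.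
Proof.
move=> f0 hi; have /card_gt0P [x0 _] : (0 < #|T|)%N by lia.
rewrite (incrementE x0 hi); case: i hi => [|j] hj //.
by rewrite subr_ge0 ascending_le.
Qed.

Lemma increment_eq0 {f} x0 {i} : (forall x, 0 <= f x) -> (i < #|T|)%N ->
  f (nth x0 (ascending f) i) = 0 -> increment f i = 0.
Proof.
move=> f0 hi fi0; rewrite (incrementE x0 hi); case: i hi fi0 => [|j] hj fi0 //.
suff -> : f (nth x0 (ascending f) j) = 0 by rewrite fi0 subrr.
by apply/le_anti; rewrite f0 -fi0 ascending_le.
Qed.

Lemma level_set_thr {f} x0 {i} : (i < #|T|)%N -> increment f i != 0 ->
  level_set f i = thr f (nth x0 (ascending f) i).
Proof.
move=> hi; rewrite (incrementE x0 hi) => hinc; apply/setP => x; rewrite /thr !inE.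
have hk : (index x (ascending f) < #|T|)%N.
  by rewrite -(size_ascending f) index_mem mem_ascending.
rewrite -(nth_index x0 (mem_ascending f x)).
case: i hi hinc => [|j] hj hinc; rewrite /level_set inE; first by rewrite ascending_le.
rewrite mem_nth_drop ?uniq_ascending ?size_ascending //.
case: (leqP j.+1 (index x (ascending f))) => h; first by rewrite ascending_le.
(* the increment at [j.+1] is a strict jump, and [x] lies at or before [j] *)
apply/esym/negbTE; rewrite -ltNge.
apply: (@le_lt_trans _ _ (f (nth x0 (ascending f) j))); first by apply: ascending_le; lia.
by rewrite lt_def -subr_eq0 hinc ascending_le.
Qed.

Lemma sum_increment f x0 m : (m < #|T|)%N ->
  \sum_(i < m.+1) increment f i = f (nth x0 (ascending f) m).
Proof.
elim: m => [|m IH] hm; first by rewrite big_ord1 (incrementE x0 hm).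
rewrite big_ord_recr IH; last lia.
change (f (nth x0 (ascending f) m) + increment f m.+1 = f (nth x0 (ascending f) m.+1)).
by rewrite (incrementE x0 hm) addrC subrK.
Qed.

Lemma thr_indicator A a : a \in A -> thr (indicator A) a = A.
Proof.
move=> aA; apply/setP => x; rewrite /thr inE /indicator aA.
by case: (x \in A); rewrite ?lexx ?ler10.
Qed.

Lemma lovasz_indicator F A : A != set0 -> lovasz F (indicator A) = F A.
Proof.
case/set0Pn => a aA; set f := indicator A.
have T0 : (0 < #|T|)%N by apply/card_gt0P; exists a.
have f0 x : 0 <= f x by rewrite /f /indicator; case: (x \in A).
have level_term (i : 'I_#|T|) :
    F (level_set f i) * increment f i = F A * increment f i.
  case: (eqVneq (increment f i) 0) => [->|hinc]; first by rewrite !mulr0.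
  rewrite (level_set_thr a (ltn_ord i) hinc) thr_indicator //.
  apply: contraNT hinc => hn; apply/eqP/(increment_eq0 a f0 (ltn_ord i)).
  by rewrite /f /indicator (negbTE hn).
have Tn : #|T| = (#|T|.-1).+1 by lia.
rewrite lovasz_level_sum // (eq_bigr _ (fun i _ => level_term i)) -mulr_sumr.
rewrite Tn (sum_increment f a) -?Tn; last lia.
have : f a <= f (nth a (ascending f) #|T|.-1).
  rewrite -{1}(nth_index a (mem_ascending f a)); apply: ascending_le; last lia.
  by have := index_mem a (ascending f); rewrite mem_ascending size_ascending; lia.
rewrite /f /indicator aA; case: (nth _ _ _ \in A) => [_|]; first by rewrite mulr1.
by rewrite ler10.
Qed.

End LovaszDecomposition.

Section ExtendedRatio.
Context {R : realFieldType}.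
Implicit Types (a b c : option R) (x y q : R).

Lemma xle_refl a : xle a a.
Proof. by case: a => //= x; rewrite lexx. Qed.

Lemma xle_trans {a b c} : xle a b -> xle b c -> xle a c.
Proof. by case: a; case: b; case: c => //= x y z; apply: le_trans. Qed.

Lemma xle_total a b : xle a b || xle b a.
Proof. by case: a; case: b => //= x y; apply: le_total. Qed.

Lemma xdiv_gt {x y q} : 0 < y -> ~~ xle (xdiv x y) (Some q) -> q * y < x.
Proof. by move=> y0; rewrite /xdiv gt_eqF //= -ltNge ltr_pdivlMr. Qed.

Lemma xle_argmin {X : eqType} (r : X -> option R) {s : seq X} {u : X} :
  u \in s -> exists2 v : X, v \in s & forall t : X, t \in s -> xle (r v) (r t).
Proof.
elim: s u => // y s IH u _; case: s IH => [|z s] IH.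
  by exists y; rewrite ?mem_head // => b; rewrite inE => /eqP->; apply: xle_refl.
have [a sa ha] := IH z (mem_head _ _).
case/orP: (xle_total (r a) (r y)) => h.
  exists a; first by rewrite inE sa orbT.
  by move=> b; rewrite inE => /orP[/eqP->|/ha].
exists y; first exact: mem_head.
move=> b; rewrite inE => /orP[/eqP->|/ha]; [exact: xle_refl | exact: xle_trans].
Qed.

Lemma exists_ratio_le_weighted_ratio {n} {c a b : 'I_n -> R} :
  (forall i, 0 <= c i) -> (forall i, 0 <= a i) -> (forall i, 0 <= b i) ->
  \sum_i b i * c i != 0 ->
  exists i, c i != 0 /\
    xle (xdiv (a i) (b i)) (xdiv (\sum_i a i * c i) (\sum_i b i * c i)).
Proof.
move=> c0 a0 b0 hB; set B := \sum_i b i * c i.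
have Bpos : 0 < B by rewrite lt_def hB sumr_ge0 // => i _; rewrite mulr_ge0.
set q := (\sum_i a i * c i) / B.
have [/existsP [i /andP [ci hi]]|/existsPn H] :=
  boolP [exists i, (c i != 0) && xle (xdiv (a i) (b i)) (Some q)].
  by exists i; rewrite /xdiv (negbTE hB).
exfalso.
have excess_ge0 i : 0 <= (a i - q * b i) * c i.
  have [->|ci] := eqVneq (c i) 0; first by rewrite mulr0.
  have [->|bi] := eqVneq (b i) 0; first by rewrite mulr0 subr0 mulr_ge0.
  have bpos : 0 < b i by rewrite lt_def bi b0.
  have := H i; rewrite ci /= => /(xdiv_gt bpos) hq.
  by rewrite mulr_ge0 // subr_ge0 ltW.
have [i0 hi0] : exists i0, b i0 * c i0 != 0.
  apply/existsP; apply: contraNT hB => /existsPn h.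
  by rewrite /B big1 // => i _; apply/eqP; have := h i; rewrite negbK.
have excess_i0 : 0 < (a i0 - q * b i0) * c i0.
  move: hi0; rewrite mulf_eq0 negb_or => /andP [bi ci].
  have bpos : 0 < b i0 by rewrite lt_def bi b0.
  have := H i0; rewrite ci /= => /(xdiv_gt bpos) hq.
  by rewrite mulr_gt0 // ?subr_gt0 // lt_def ci c0.
have : 0 < \sum_i (a i - q * b i) * c i.
  rewrite (bigD1 i0) //=; apply: ltr_wpDr excess_i0.
  by rewrite sumr_ge0.
under eq_bigr => i _ do rewrite mulrBl -mulrA.
by rewrite sumrB -mulr_sumr /q divfK // subrr ltxx.
Qed.

End ExtendedRatio.

Section LovaszRatio.
Context {R : realFieldType} {T : finType} {F1 F2 : {set T} -> R}.
Hypotheses (F1_ge0 : forall A, 0 <= F1 A) (F2_ge0 : forall A, 0 <= F2 A).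
Implicit Types (f : T -> R) (A B : {set T}).

Local Notation ext_ratio f := (xdiv (lovasz F1 f) (lovasz F2 f)).
Local Notation set_ratio A := (xdiv (F1 A) (F2 A)).

Definition nonneg_nonzero (f : T -> R) := (forall j, 0 <= f j) /\ (exists j, f j != 0).

Lemma lovasz_ratio_ge_thr_ratio f : nonneg_nonzero f ->
  exists i, xle (set_ratio (thr f i)) (ext_ratio f).
Proof.
move=> [f0 [x0 _]]; have T0 : (0 < #|T|)%N by apply/card_gt0P; exists x0.
rewrite !lovasz_level_sum //.
have [->|hB] := eqVneq (\sum_(i < #|T|) F2 (level_set f i) * increment f i) 0.
  by exists x0; rewrite /xdiv eqxx; case: (_ == 0).
have [i [hinc hle]] := exists_ratio_le_weighted_ratio
  (fun i => increment_ge0 f0 (ltn_ord i)) (fun i => F1_ge0 (level_set f i))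
  (fun i => F2_ge0 (level_set f i)) hB.
by exists (nth x0 (ascending f) i); rewrite -(level_set_thr x0 (ltn_ord i) hinc).
Qed.

Lemma nonneg_nonzero_indicator {A} : A != set0 -> nonneg_nonzero (indicator A).
Proof.
case/set0Pn => a aA; split; first by move=> j; rewrite /indicator; case: (j \in A).
by exists a; rewrite /indicator aA oner_neq0.
Qed.

Lemma lovasz_ratio_indicator A : A != set0 -> ext_ratio (indicator A) = set_ratio A.
Proof. by move=> A0; rewrite !lovasz_indicator. Qed.

Lemma thr_neq0 f i : thr f i != set0.
Proof. by apply/set0Pn; exists i; rewrite inE. Qed.

Lemma exists_min_set_ratio : (0 < #|T|)%N ->
  exists2 A, A != set0 & forall B, B != set0 -> xle (set_ratio A) (set_ratio B).
Proof.
case/card_gt0P => x0 _; set nonempty := [seq A <- enum {set T} | A != set0].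
have x0_in : [set x0] \in nonempty.
  by rewrite mem_filter mem_enum andbT; apply/set0Pn; exists x0; rewrite inE.
have [A + minA] := xle_argmin (fun A => set_ratio A) x0_in.
rewrite mem_filter => /andP [A0 _]; exists A => // B B0.
by apply: minA; rewrite mem_filter B0 mem_enum.
Qed.

Lemma lovasz_ratio_min_eq_set_ratio_min : (0 < #|T|)%N ->
  exists fstar, nonneg_nonzero fstar /\
    (forall f, nonneg_nonzero f -> xle (ext_ratio fstar) (ext_ratio f)) /\
    exists Astar, Astar != set0 /\
      (forall A, A != set0 -> xle (set_ratio Astar) (set_ratio A)) /\
      ext_ratio fstar = set_ratio Astar.
Proof.
move=> /exists_min_set_ratio [Astar Astar0 minA].
exists (indicator Astar); split; first exact: nonneg_nonzero_indicator.
rewrite lovasz_ratio_indicator //; split; last by exists Astar.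
move=> f /lovasz_ratio_ge_thr_ratio [i hi].
exact: xle_trans (minA _ (thr_neq0 f i)) hi.
Qed.

Lemma thr_argmin_set_ratio_min fstar : nonneg_nonzero fstar ->
  (forall f, nonneg_nonzero f -> xle (ext_ratio fstar) (ext_ratio f)) ->
  forall i, (forall j, xle (set_ratio (thr fstar i)) (set_ratio (thr fstar j))) ->
  forall A, A != set0 -> xle (set_ratio (thr fstar i)) (set_ratio A).
Proof.
move=> /lovasz_ratio_ge_thr_ratio [j hj] minf i mini A A0.
have := minf _ (nonneg_nonzero_indicator A0); rewrite lovasz_ratio_indicator // => hA.
exact: xle_trans (mini j) (xle_trans hj hA).
Qed.

End LovaszRatio.

Section Nonnegativity.
Context {R : realFieldType} {V : finType}.
Implicit Types (w : V -> V -> R) (h : V -> R) (S : {set V}).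

Lemma vol_ge0 {h} {X : {set V}} : (forall v, 0 <= h v) -> 0 <= vol h X.
Proof. by move=> h0; rewrite sumr_ge0. Qed.

Lemma unitS_ge0 (X : {set V}) : 0 <= unitS R X.
Proof. by rewrite /unitS; case: ifP. Qed.

Lemma pen_ge0 p (M : 'I_p -> V -> R) (k l : 'I_p -> R) (dist : V -> V -> R) d0
  (X : {set V}) : 0 <= pen M k l dist d0 X.
Proof.
rewrite /pen; case: ifP => // _.
by rewrite !addr_ge0 ?sumr_ge0 // => *; rewrite ?sumr_ge0 // => *; rewrite le_max lexx.
Qed.

Lemma Rset_ge0 h S gamma p (M : 'I_p -> V -> R) (k l : 'I_p -> R) dist d0
  (A : {set Vp S}) : (forall v, 0 <= h v) -> 0 <= gamma ->
  0 <= Rset h gamma M k l dist d0 A.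
Proof.
move=> h0 gamma0.
by rewrite !addr_ge0 ?mulr_ge0 ?vol_ge0 ?unitS_ge0 ?pen_ge0.
Qed.

Lemma assocS_ge0 w S (A : {set Vp S}) : (forall i j, 0 <= w i j) -> 0 <= assocS w A.
Proof.
move=> w0; rewrite /assocS.
(* the cut towards V' \ A is part of vol_d(A) *)
have cut_le : cut w (liftS A) (~: S :\: liftS A) <= vol (degw w) (liftS A).
  apply: ler_sum => i _; rewrite [leRHS](bigID (mem (~: S :\: liftS A))) /=.
  by rewrite lerDl sumr_ge0.
have degS_ge0 v : 0 <= degS w S v by rewrite sumr_ge0.
have assoc_ge0 : 0 <= assoc w S by rewrite !sumr_ge0 // => i _; rewrite sumr_ge0.
by rewrite -addrA addr_ge0 ?subr_ge0 // addr_ge0 ?mulr_ge0 ?unitS_ge0 ?(vol_ge0 degS_ge0).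
Qed.

Lemma card_Vp_gt0 S : S != setT -> (0 < #|{: Vp S}|)%N.
Proof.
move=> ST; have [x xS] : exists x, x \in ~: S.
  by apply/existsP; apply: contraNT ST => /existsPn xS; apply/eqP/setP => x;
    rewrite inE; apply/negPn; rewrite -in_setC.
by apply/card_gt0P; exists (exist _ x xS).
Qed.

End Nonnegativity.

Theorem theorem2 (R : realFieldType) (V : finType) (w : V -> V -> R)
  (w_sym : forall i j, w i j = w j i) (w_ge0 : forall i j, 0 <= w i j)
  (w_diag : forall i, w i i = 0)
  (S : {set V}) (g : V -> R) (g_pos : forall i, 0 < g i)
  (p : nat) (M : 'I_p -> V -> R) (M_ge0 : forall j v, 0 <= M j v)
  (k l : 'I_p -> R) (dist : V -> V -> R)
  (dist_sym : forall u v, dist u v = dist v u) (dist_ge0 : forall u v, 0 <= dist u v)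
  (dist_diag : forall u, dist u u = 0) (d0 : R) (d0_ge0 : 0 <= d0)
  (gamma : R) (gamma_ge0 : 0 <= gamma) :
  let RR := Rset g gamma M k l dist d0 in
  let AS := assocS w (S := S) in
  let ratioL (f : Vp S -> R) := xdiv (lovasz RR f) (lovasz AS f) in
  let ratioS (A : {set Vp S}) := xdiv (RR A) (AS A) in
  let admissible (f : Vp S -> R) := (forall j, 0 <= f j) /\ (exists j, f j != 0) in
  (* 1. *)
  (forall f, admissible f ->
     exists i, xle (ratioS (thr f i)) (ratioL f)) /\
  (* 2. (V' nonempty) *)
  (S != setT ->
     exists fstar, admissible fstar /\
       (forall f, admissible f -> xle (ratioL fstar) (ratioL f)) /\
       exists Astar : {set Vp S}, Astar != set0 /\
         (forall A, A != set0 -> xle (ratioS Astar) (ratioS A)) /\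
         ratioL fstar = ratioS Astar) /\
  (* 3. *)
  (forall fstar, admissible fstar ->
     (forall f, admissible f -> xle (ratioL fstar) (ratioL f)) ->
     forall i, (forall i', xle (ratioS (thr fstar i)) (ratioS (thr fstar i'))) ->
     forall A : {set Vp S}, A != set0 -> xle (ratioS (thr fstar i)) (ratioS A)).
Proof.
move=> RR AS ratioL ratioS admissible.
have RR_ge0 A : 0 <= RR A by apply: Rset_ge0 => // v; exact: ltW.
have AS_ge0 A : 0 <= AS A by exact: assocS_ge0.
split; first exact: lovasz_ratio_ge_thr_ratio.
split; first by move/card_Vp_gt0; exact: lovasz_ratio_min_eq_set_ratio_min.
exact: thr_argmin_set_ratio_min.
Qed.
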